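(* Let $\lambda$ be a partition of $n$ and $t$ a tableau of shape $\lambda$. Then $\phi(\mathbf{e}_t)=\sum_{\pi\in C_t}\mathrm{sgn}(\pi)\,\pi^{-1}\circ\phi(\{t\})$.
   Context: For $\pi\in\mathrm{Sym}_n$ and a tableau $t$ of shape $\lambda$ (filling of the Young diagram with $1,\ldots,n$), $\pi(t)$ replaces each entry $x$ by $\pi(x)$. The $\lambda$-tabloid $\{t\}$ is the set of all tableaux obtained from $t$ by permuting entries within rows. $C_t$ is the column-stabilizer of $t$ (permutations preserving each column's set of entries). The polytabloid is $\mathbf{e}_t=\sum_{\sigma\in C_t}\mathrm{sgn}(\sigma)\{\sigma(t)\}\in M^\lambda$, where $M^\lambda$ is the complex vector space with basis the $\lambda$-tabloids. $id_\lambda$ is the standard tableau whose rows consist of consecutive numbers, $\tau_t$ is the unique permutation with $\tau_t(t)=id_\lambda$, and $\phi:M^\lambda\to\mathbb{C}[\mathrm{Sym}_n]$ is the linear map with $\phi(\{t\})=\sum_{t'\in\{t\}}\tau_{t'}$. Permutations are composed so that $(\alpha\circ\beta)(x)=\beta(\alpha(x))$, and $\sigma\circ\sum a_\pi\pi=\sum a_\pi(\sigma\circ\pi)$. *)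

From mathcomp Require Import all_boot all_order all_algebra all_fingroup all_field.
Set Implicit Arguments. Unset Strict Implicit. Unset Printing Implicit Defensive.
Import GRing.Theory Num.Theory.
Local Open Scope ring_scope.

(* Entries 1..n are modelled by 'I_n (entry x+1 <-> x).  The cells of the
   Young diagram of la are numbered 0..n-1 in reading order (row by row,
   left to right); a tableau of shape la is a bijection t : cells -> entries,
   i.e. t : {perm 'I_n}, t k = entry in cell k. *)

Definition is_partition (n : nat) (la : seq nat) : bool :=
  [&& sorted geq la, all (fun x => 0 < x)%N la & sumn la == n].

(* row and column (0-based) of the cell with reading index k *)
Definition cell_row (la : seq nat) (k : nat) : nat :=
  count (fun i => sumn (take i.+1 la) <= k)%N (iota 0 (size la)).
Definition cell_col (la : seq nat) (k : nat) : nat :=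
  (k - sumn (take (cell_row la k) la))%N.

Section Tab.
Variable n : nat.
Local Notation perm := {perm 'I_n}.

(* pi(t): replace each entry x by pi x.  Mathcomp's product satisfies
   (a * b) x = b (a x), matching the paper's composition convention. *)
Definition pact (pi t : perm) : perm := (t * pi)%g.

Definition row_stab (la : seq nat) : {set perm} :=
  [set s : perm | [forall k : 'I_n, cell_row la (s k) == cell_row la k]].
Definition tabloid (la : seq nat) (t : perm) : {set perm} :=
  [set (s * t)%g | s in row_stab la].
Definition is_tabloid (la : seq nat) (T : {set perm}) : bool :=
  [exists t : perm, T == tabloid la t].

Definition col_stab (la : seq nat) (t : perm) : {set perm} :=
  [set pi : perm | [forall x : 'I_n,
     cell_col la ((t^-1)%g (pi x)) == cell_col la ((t^-1)%g x)]].

Definition sgn (pi : perm) : algC := (-1) ^+ odd_perm pi.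

Notation Mla := {ffun {set {perm 'I_n}} -> algC^o}.
Definition tbasis (T : {set perm}) : Mla := [ffun T' => (T' == T)%:R].

Definition polytabloid (la : seq nat) (t : perm) : Mla :=
  \sum_(sigma in col_stab la t) sgn sigma *: tbasis (tabloid la (pact sigma t)).

Notation GA := {ffun {perm 'I_n} -> algC^o}.
Definition gdelta (p : perm) : GA := [ffun q => (q == p)%:R].

(* id_la is the tableau with rows of consecutive numbers, i.e. the identity *)
Definition id_la : perm := 1%g.
(* tau_t : the unique permutation with tau_t(t) = id_la, i.e. t^-1 *)
Definition tau (t : perm) : perm := (t^-1)%g.

Definition phi_tabloid (T : {set perm}) : GA := \sum_(t' in T) gdelta (tau t').
Definition phi (la : seq nat) (v : Mla) : GA :=
  \sum_(T | is_tabloid la T) v T *: phi_tabloid T.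

Definition lcomp (sigma : perm) (f : GA) : GA :=
  \sum_(p : perm) f p *: gdelta (sigma * p)%g.
End Tab.

(* Both sides are linear in the tabloid data, so it suffices to compare, for
   each pi in C_t, the image of the tabloid {pi(t)} with pi^-1 o phi({t}).
   The tabloid {pi(t)} is the right translate {t} pi, and since
   tau_(t' pi) = pi^-1 tau_(t'), translating a set of tableaux on the right
   by pi composes every term of phi on the left with pi^-1. *)
From HB Require Import structures.
From mathcomp Require Import all_boot all_order all_algebra all_fingroup all_field.
Import GRing.Theory.
Local Open Scope ring_scope.

Section Phi.
Variable n : nat.
Local Notation perm := {perm 'I_n}.

Fact phi_is_linear (la : seq nat) : linear (@phi n la).
Proof.
move=> a u v; rewrite /phi scaler_sumr -big_split; apply: eq_bigr => T _.
by rewrite !ffunE scalerDl scalerA.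
Qed.

HB.instance Definition _ (la : seq nat) :=
  GRing.isLinear.Build algC _ _ _ (@phi n la) (phi_is_linear la).

Fact lcomp_is_linear (s : perm) : linear (lcomp s).
Proof.
move=> a f g; rewrite /lcomp scaler_sumr -big_split; apply: eq_bigr => p _.
by rewrite !ffunE scalerDl scalerA.
Qed.

HB.instance Definition _ (s : perm) :=
  GRing.isLinear.Build algC _ _ _ (lcomp s) (lcomp_is_linear s).

Lemma lcomp_gdelta (s q : perm) : lcomp s (gdelta q) = gdelta (s * q)%g.
Proof.
rewrite /lcomp (bigD1 q) //= big1 ?addr0; first by rewrite ffunE eqxx scale1r.
by move=> p /negbTE neq_pq; rewrite ffunE neq_pq scale0r.
Qed.

Lemma phi_tbasis (la : seq nat) (T : {set perm}) :
  is_tabloid la T -> phi la (tbasis T) = phi_tabloid T.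
Proof.
move=> tabT; rewrite /phi (bigD1 T) //= big1 ?addr0; first by rewrite ffunE eqxx scale1r.
by move=> T' /andP[_ /negbTE neq_T'T]; rewrite ffunE neq_T'T scale0r.
Qed.

Lemma tabloid_is_tabloid (la : seq nat) (t : perm) : is_tabloid la (tabloid la t).
Proof. by apply/existsP; exists t. Qed.

Lemma tabloid_mulr (la : seq nat) (t pi : perm) :
  tabloid la (t * pi)%g = (tabloid la t :* pi)%g.
Proof.
rewrite -rcosetE /rcoset /tabloid -imset_comp.
by apply: eq_imset => s /=; rewrite mulgA.
Qed.

Lemma phi_tabloid_rcoset (T : {set perm}) (pi : perm) :
  phi_tabloid (T :* pi)%g = lcomp pi^-1 (phi_tabloid T).
Proof.
rewrite -rcosetE /phi_tabloid linear_sum big_imset; last by move=> x y _ _ /mulIg.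
by apply: eq_bigr => t' _; rewrite /tau invMg -lcomp_gdelta.
Qed.

End Phi.

Theorem lemma5 (n : nat) (la : seq nat) (hla : is_partition n la)
  (t : {perm 'I_n}) :
  phi la (polytabloid la t) =
  \sum_(pi in col_stab la t) sgn pi *: lcomp (pi^-1)%g (phi la (tbasis (tabloid la t))).
Proof.
rewrite linear_sum; apply: eq_bigr => pi _.
rewrite linearZ /= !phi_tbasis ?tabloid_is_tabloid //.
by rewrite /pact tabloid_mulr phi_tabloid_rcoset.
Qed.
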